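(* Let $n\ge2$. For $a_{ij}\in\{\pm1\}$ ($1\le i<j\le n$) and $b_1,\dots,b_n\in\{\pm1\}$, define $$\mathcal B_{Zn}=\sum_{1\le i<j\le n}a_{ij}(b_i-b_j).$$ Then the maximum of $\mathcal B_{Zn}$ over all $\pm1$ assignments equals $\lfloor n^2/2\rfloor$. Consequently, for any local hidden variable model, $\langle\mathcal B_{Zn}\rangle_{\mathrm{LHV}}\le\lfloor n^2/2\rfloor$.
   Context: A local hidden variable model assigns, for a variable $\lambda$ distributed with a probability density $q$, outcomes $A(\lambda,i)\in\{\pm1\}$ to each of Alice's settings $i$ and $B(\lambda,j)\in\{\pm1\}$ to each of Bob's settings $j$; the correlation is $\langle\alpha_i\beta_j\rangle_{\mathrm{LHV}}=\int q(\lambda)A(\lambda,i)B(\lambda,j)\,d\lambda$, and $\langle\mathcal B\rangle_{\mathrm{LHV}}$ is obtained from the bilinear expression $\mathcal B$ by replacing each product $a_ib_j$ with $\langle\alpha_i\beta_j\rangle_{\mathrm{LHV}}$. $\lfloor x\rfloor$ is the largest integer $\le x$. *)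

From HB Require Import structures.
From mathcomp Require Import all_boot all_order all_algebra.
Set Implicit Arguments. Unset Strict Implicit. Unset Printing Implicit Defensive.
Import Order.TTheory GRing.Theory Num.Theory.
Local Open Scope ring_scope.

Definition pm1 {R : ringType} (x : R) : Prop := x = 1 \/ x = -1.

(* B_Zn = sum_{i<j} a_ij (b_i - b_j), indices 0..n-1 *)
Definition BZn {R : ringType} (n : nat) (a : 'I_n -> 'I_n -> R) (b : 'I_n -> R) : R :=
  \sum_(i < n) \sum_(j < n | (i < j)%N) a i j * (b i - b j).

(* Expectation with respect to a probability distribution of the hidden
   variable lambda : Lam, i.e. f |-> \int q(lambda) f(lambda) dlambda,
   axiomatised as a normalised positive linear functional. *)
Definition is_expectation {R : realFieldType} (Lam : Type) (E : (Lam -> R) -> R) : Prop :=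
  (forall f g, E (fun l => f l + g l) = E f + E g) /\
  (forall c f, E (fun l => c * f l) = c * E f) /\
  (forall f g, (forall l, f l <= g l) -> E f <= E g) /\
  E (fun _ => 1) = 1.

(* <B_Zn>_LHV : each product a_ij b_k replaced by <alpha_ij beta_k>_LHV *)
Definition BZn_LHV {R : realFieldType} (n : nat) (Lam : Type) (E : (Lam -> R) -> R)
  (A : Lam -> 'I_n -> 'I_n -> R) (B : Lam -> 'I_n -> R) : R :=
  \sum_(i < n) \sum_(j < n | (i < j)%N)
     (E (fun l => A l i j * B l i) - E (fun l => A l i j * B l j)).

(* For +-1 values, a (x - y) <= 1 - x y, with equality when a = 1 and
   x >= y.  Hence B_Zn is bounded by the "disagreement sum"
   sum_{i<j} (1 - b_i b_j), which is twice the number of pairs {i, j} with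
   b_i <> b_j, i.e. 2 p q where p (resp. q) counts the entries equal to 1
   (resp. -1).  Since p + q = n, the AM-GM inequality gives
   2 p q <= floor(n^2/2).  Conversely, a = 1 and b = (1,..,1,-1,..,-1) with
   floor(n/2) entries equal to 1 make every inequality an equality and
   2 floor(n/2) (n - floor(n/2)) = floor(n^2/2).  Finally, <B_Zn>_LHV is the
   expectation of the deterministic values of B_Zn, so the same bound holds
   by linearity and monotonicity of the expectation. *)

From Stdlib Require Import FunctionalExtensionality.
From HB Require Import structures.
From mathcomp Require Import all_boot all_order all_algebra.
From mathcomp Require Import zify.
Import Order.TTheory GRing.Theory Num.Theory.

Lemma double_prod_le_half_sq p q : (2 * p * q <= (p + q) ^ 2 %/ 2)%N.
Proof. by rewrite leq_divRL //; have := (nat_AGM2 p q).1; nia. Qed.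

Lemma double_prod_half n : (2 * n./2 * (n - n./2) = n ^ 2 %/ 2)%N.
Proof. by have := odd_double_half n; case: (odd n) => /= <-; nia. Qed.

Local Open Scope ring_scope.

Section PlusMinusOne.
Context {R : realDomainType}.
Implicit Types a x y : R.

Lemma pm1_N1_neq1 : (-1 : R) != 1.
Proof. by rewrite lt_eqF // (lt_trans (ltrN10 R) ltr01). Qed.

Lemma pm1_term_le a x y : pm1 a -> pm1 x -> pm1 y -> a * (x - y) <= 1 - x * y.
Proof.
case=> ->; case=> ->; case=> ->;
rewrite ?mul1r ?mulN1r ?mulr1 ?mulrN1 ?opprK ?subrr ?opprB ?opprK ?addNr
  ?oppr0 ?lexx //;
by rewrite -?opprD; apply: (@le_trans _ _ 0); rewrite ?oppr_le0 -mulr2n ler0n.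
Qed.

Lemma pm1_diff_ordered x y : pm1 x -> pm1 y -> y <= x -> x - y = 1 - x * y.
Proof.
case=> ->; case=> -> hyx; rewrite ?mul1r ?mulN1r ?opprK ?subrr ?addNr //.
by move: hyx; rewrite leNgt (lt_trans (ltrN10 R) ltr01).
Qed.

Lemma pm1_add1 x : pm1 x -> 1 + x = (2 * (x == 1))%:R.
Proof. by case=> ->; rewrite ?eqxx ?(negPf pm1_N1_neq1) ?subrr. Qed.

Lemma pm1_sub1 x : pm1 x -> 1 - x = (2 * (x == -1))%:R.
Proof.
case=> ->; rewrite ?eqxx ?opprK // subrr.
by rewrite eq_sym (negPf pm1_N1_neq1).
Qed.

End PlusMinusOne.

Lemma sum_ord_lt n k : (\sum_(i < n) (i < k) = minn k n)%N.
Proof. by elim: n => [|n IH]; rewrite ?big_ord0 ?minn0 // big_ord_recr /= IH; lia. Qed.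

Definition pairsum {V : nmodType} {n : nat} (F : 'I_n -> 'I_n -> V) : V :=
  \sum_(i < n) \sum_(j < n | (i < j)%N) F i j.

Lemma pairsum_recr (V : nmodType) n (F : 'I_n.+1 -> 'I_n.+1 -> V) :
  pairsum F = pairsum (fun i j : 'I_n => F (widen_ord (leqnSn n) i) (widen_ord (leqnSn n) j))
              + \sum_(i < n) F (widen_ord (leqnSn n) i) ord_max.
Proof.
rewrite /pairsum big_ord_recr /= [X in _ + X]big1 ?addr0; last first.
  by move=> j; rewrite ltnNge -ltnS ltn_ord.
rewrite -big_split /=; apply: eq_bigr => i _.
by rewrite big_mkcond big_ord_recr /= ltn_ord -big_mkcond.
Qed.

Definition count_eq {T : eqType} {n : nat} (b : 'I_n -> T) (x : T) : nat :=
  \sum_(i < n) (b i == x).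

Lemma count_eq_recr (T : eqType) n (b : 'I_n.+1 -> T) x :
  count_eq b x = (count_eq (fun i : 'I_n => b (widen_ord (leqnSn n) i)) x + (b ord_max == x))%N.
Proof. by rewrite /count_eq big_ord_recr. Qed.

Section DisagreementSum.
Context {R : realDomainType}.

Lemma count_pm1 n (b : 'I_n -> R) : (forall i, pm1 (b i)) ->
  (count_eq b 1%R + count_eq b (-1)%R = n)%N.
Proof.
move=> hb; rewrite /count_eq -big_split /= -[n in RHS]card_ord -sum1_card.
apply: eq_bigr => i _; case: (hb i) => ->; rewrite eqxx ?(negPf (@pm1_N1_neq1 R)) //.
by rewrite eq_sym (negPf (@pm1_N1_neq1 R)).
Qed.

Lemma sum_add1_pm1 n (b : 'I_n -> R) : (forall i, pm1 (b i)) ->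
  \sum_(i < n) (1 + b i) = (2 * count_eq b 1)%:R.
Proof.
move=> hb; rewrite (eq_bigr _ (fun i _ => pm1_add1 _ (hb i))) -natr_sum.
by rewrite -big_distrr.
Qed.

Lemma sum_sub1_pm1 n (b : 'I_n -> R) : (forall i, pm1 (b i)) ->
  \sum_(i < n) (1 - b i) = (2 * count_eq b (-1))%:R.
Proof.
move=> hb; rewrite (eq_bigr _ (fun i _ => pm1_sub1 _ (hb i))) -natr_sum.
by rewrite -big_distrr.
Qed.

(* The disagreement sum of a +-1 vector with p entries 1 and q entries -1
   is 2 p q: each of the p q discordant pairs contributes 2. *)
Lemma disagreement_sum n (b : 'I_n -> R) : (forall i, pm1 (b i)) ->
  pairsum (fun i j => 1 - b i * b j) = (2 * count_eq b 1 * count_eq b (-1))%:R.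
Proof.
elim: n b => [|n IH] b hb; first by rewrite /pairsum /count_eq !big_ord0.
rewrite pairsum_recr IH => [|i]; last exact: hb.
rewrite !count_eq_recr; case: (hb ord_max) => ->.
- under eq_bigr do rewrite mulr1.
  rewrite sum_sub1_pm1 => [|i]; last exact: hb.
  rewrite -natrD eqxx eq_sym (negPf (@pm1_N1_neq1 R)) /=; congr _%:R; lia.
- under eq_bigr do rewrite mulrN1 opprK.
  rewrite sum_add1_pm1 => [|i]; last exact: hb.
  rewrite -natrD eqxx (negPf (@pm1_N1_neq1 R)) /=; congr _%:R; lia.
Qed.

End DisagreementSum.

Section LocalBound.
Context {R : realDomainType}.

Lemma BZn_le_disagreement n (a : 'I_n -> 'I_n -> R) (b : 'I_n -> R) :
  (forall i j : 'I_n, (i < j)%N -> pm1 (a i j)) -> (forall i, pm1 (b i)) ->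
  BZn a b <= pairsum (fun i j => 1 - b i * b j).
Proof.
move=> ha hb; apply: ler_sum => i _; apply: ler_sum => j hij.
exact: pm1_term_le (ha _ _ hij) (hb i) (hb j).
Qed.

Lemma BZn_local_bound n (a : 'I_n -> 'I_n -> R) (b : 'I_n -> R) :
  (forall i j : 'I_n, (i < j)%N -> pm1 (a i j)) -> (forall i, pm1 (b i)) ->
  BZn a b <= ((n ^ 2) %/ 2)%:R.
Proof.
move=> ha hb; apply: le_trans (BZn_le_disagreement _ _ _ ha hb) _.
rewrite disagreement_sum // ler_nat.
by have := double_prod_le_half_sq (count_eq b 1) (count_eq b (-1)); rewrite count_pm1.
Qed.

Definition step_vector (n k : nat) (i : 'I_n) : R := if (i < k)%N then 1 else -1.

Lemma step_vector_pm1 n k i : pm1 (step_vector n k i).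
Proof. by rewrite /step_vector; case: ifP; [left | right]. Qed.

Lemma step_vector_nonincr n k (i j : 'I_n) :
  (i < j)%N -> step_vector n k j <= step_vector n k i.
Proof.
rewrite /step_vector => hij; case: (ltnP j k) => hj.
  by rewrite (ltn_trans hij hj).
by case: ifP => _; rewrite ?lexx // (le_trans (lerN10 R)) ?ler01.
Qed.

Lemma count_step_vector n k : (k <= n)%N -> count_eq (step_vector n k) 1 = k.
Proof.
move=> hkn; rewrite /count_eq -[RHS](minn_idPl hkn) -sum_ord_lt.
apply: eq_bigr => i _; rewrite /step_vector; case: ifP => _; rewrite ?eqxx //.
by rewrite (negPf (@pm1_N1_neq1 R)).
Qed.

Lemma BZn_step_vector n :
  BZn (fun _ _ => 1) (step_vector n n./2) = ((n ^ 2) %/ 2)%:R.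
Proof.
have hb := step_vector_pm1 n n./2.
transitivity (pairsum (fun i j => 1 - step_vector n n./2 i * step_vector n n./2 j)).
  apply: eq_bigr => i _; apply: eq_bigr => j hij.
  by rewrite mul1r pm1_diff_ordered // step_vector_nonincr.
have hp : count_eq (step_vector n n./2) 1 = n./2.
  by rewrite count_step_vector // leq_half_double -addnn leqW ?leq_addr.
have hq : count_eq (step_vector n n./2) (-1) = (n - n./2)%N.
  by have := count_pm1 _ _ hb; rewrite hp; lia.
by rewrite disagreement_sum // hp hq double_prod_half.
Qed.

End LocalBound.

Section Expectation.
Context {R : realFieldType} {Lam : Type} {E : (Lam -> R) -> R}.
Hypothesis hE : is_expectation E.

Lemma expectation_const c : E (fun _ => c) = c.
Proof.
case: hE => _ [hZ [_ h1]].
have -> : (fun _ : Lam => c) = (fun l => c * (fun _ => 1) l).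
  by apply: functional_extensionality => l; rewrite mulr1.
by rewrite hZ h1 mulr1.
Qed.

Lemma expectation_sum (I : Type) (r : seq I) (P : pred I) (F : I -> Lam -> R) :
  E (fun l => \sum_(i <- r | P i) F i l) = \sum_(i <- r | P i) E (F i).
Proof.
case: (hE) => hD _; elim: r => [|x r IH].
  have -> : (fun l => \sum_(i <- [::] | P i) F i l) = (fun _ => 0).
    by apply: functional_extensionality => l; rewrite big_nil.
  by rewrite expectation_const big_nil.
have -> : (fun l => \sum_(i <- x :: r | P i) F i l)
          = (fun l => (if P x then F x l else 0) + \sum_(i <- r | P i) F i l).
  by apply: functional_extensionality => l; rewrite big_cons; case: (P x); rewrite ?add0r.
by rewrite hD IH big_cons; case: (P x); rewrite ?expectation_const ?add0r.
Qed.

Lemma expectation_sub f g : E (fun l => f l - g l) = E f - E g.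
Proof.
case: hE => hD [hZ _].
have -> : (fun l => f l - g l) = (fun l => f l + (-1) * g l).
  by apply: functional_extensionality => l; rewrite mulN1r.
by rewrite hD hZ mulN1r.
Qed.

Lemma BZn_LHV_expectation n (A : Lam -> 'I_n -> 'I_n -> R) (B : Lam -> 'I_n -> R) :
  BZn_LHV E A B = E (fun l => BZn (A l) (B l)).
Proof.
rewrite /BZn_LHV /BZn expectation_sum; apply: eq_bigr => i _.
rewrite expectation_sum; apply: eq_bigr => j _.
rewrite -expectation_sub; congr E; apply: functional_extensionality => l.
by rewrite mulrBr.
Qed.

End Expectation.

Theorem mainTheorem7 (R : realFieldType) (n : nat) (hn : (2 <= n)%N) :
  ((forall (a : 'I_n -> 'I_n -> R) (b : 'I_n -> R),
      (forall i j : 'I_n, (i < j)%N -> pm1 (a i j)) ->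
      (forall i : 'I_n, pm1 (b i)) ->
      BZn a b <= ((n ^ 2) %/ 2)%:R)
   /\ (exists (a : 'I_n -> 'I_n -> R) (b : 'I_n -> R),
      (forall i j : 'I_n, (i < j)%N -> pm1 (a i j)) /\
      (forall i : 'I_n, pm1 (b i)) /\
      BZn a b = ((n ^ 2) %/ 2)%:R))
  /\
  (forall (Lam : Type) (E : (Lam -> R) -> R)
          (A : Lam -> 'I_n -> 'I_n -> R) (B : Lam -> 'I_n -> R),
      is_expectation E ->
      (forall l (i j : 'I_n), (i < j)%N -> pm1 (A l i j)) ->
      (forall l (i : 'I_n), pm1 (B l i)) ->
      BZn_LHV E A B <= ((n ^ 2) %/ 2)%:R).
Proof.
split; [split|].
- exact: BZn_local_bound.
- exists (fun _ _ => 1), (step_vector n n./2).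
  split; first by move=> i j _; left.
  by split; [exact: step_vector_pm1 | exact: BZn_step_vector].
- move=> Lam E A B hE hA hB.
  rewrite BZn_LHV_expectation // -[X in _ <= X](expectation_const hE).
  case: hE => _ [_ [hM _]]; apply: hM => l.
  exact: BZn_local_bound (hA l) (hB l).
Qed.
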